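(* Let $S$ be an abundant semigroup with an adequate transversal $S^0$. Then for all $x\in S^0$, $a\in\Lambda$ and $b\in I$: $a\,\mathcal{R}\,x^\ast$ if and only if $\overline{a}=x^\ast$, and $b\,\mathcal{L}\,x^+$ if and only if $\overline{b}=x^+$.
   Context: For a semigroup $S$, $S^1$ is $S$ with an identity adjoined, $\mathcal{L},\mathcal{R}$ Green's relations of $S$. $\mathcal{R}^\ast=\{(a,b):\forall x,y\in S^1,\ xa=ya\iff xb=yb\}$, $\mathcal{L}^\ast=\{(a,b):\forall x,y\in S^1,\ ax=ay\iff bx=by\}$. $S$ is abundant if each $\mathcal{R}^\ast$- and $\mathcal{L}^\ast$-class contains an idempotent; adequate if also idempotents commute (then $a^+$, $a^\ast$ are the unique idempotents $\mathcal{R}^\ast$-, resp. $\mathcal{L}^\ast$-related to $a$). An abundant subsemigroup $U$ of abundant $S$ is a $\ast$-subsemigroup if $\mathcal{L}^\ast(U)=\mathcal{L}^\ast(S)\cap(U\times U)$, $\mathcal{R}^\ast(U)=\mathcal{R}^\ast(S)\cap(U\times U)$. An adequate $\ast$-subsemigroup $S^0$ of abundant $S$ is an adequate transversal if each $x\in S$ has a unique $\overline{x}\in S^0$ and idempotents $e,f$ of $S$ (then unique, written $e_x,f_x$) with $x=e\overline{x}f$, $e\,\mathcal{L}\,\overline{x}^+$, $f\,\mathcal{R}\,\overline{x}^\ast$. $I=\{e_x:x\in S\}$, $\Lambda=\{f_x:x\in S\}$. *)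

From Stdlib Require Import ClassicalEpsilon.

Set Implicit Arguments.

Record semigroup := Semigroup {
  carrier :> Type;
  mul : carrier -> carrier -> carrier;
  mulA : forall a b c, mul a (mul b c) = mul (mul a b) c }.

Section Defs.
Variable S : semigroup.
Local Notation "x * y" := (mul S x y).

(* S^1 = option S, with None the adjoined identity. *)
Definition lmul1 (u : option S) (a : S) : S :=
  match u with None => a | Some x => x * a end.
Definition rmul1 (a : S) (u : option S) : S :=
  match u with None => a | Some x => a * x end.

Definition idem (e : S) : Prop := e * e = e.

Definition GreenL (a b : S) : Prop :=
  (exists u, a = lmul1 u b) /\ (exists v, b = lmul1 v a).
Definition GreenR (a b : S) : Prop :=
  (exists u, a = rmul1 b u) /\ (exists v, b = rmul1 a v).

Definition in1 (U : S -> Prop) (u : option S) : Prop :=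
  match u with None => True | Some x => U x end.

Definition Rstar_in (U : S -> Prop) (a b : S) : Prop :=
  forall x y, in1 U x -> in1 U y ->
    (lmul1 x a = lmul1 y a <-> lmul1 x b = lmul1 y b).
Definition Lstar_in (U : S -> Prop) (a b : S) : Prop :=
  forall x y, in1 U x -> in1 U y ->
    (rmul1 a x = rmul1 a y <-> rmul1 b x = rmul1 b y).

Definition allS : S -> Prop := fun _ => True.
Definition Rstar := Rstar_in allS.
Definition Lstar := Lstar_in allS.

Definition subsemigroup (U : S -> Prop) : Prop :=
  forall a b, U a -> U b -> U (a * b).

Definition abundant_in (U : S -> Prop) : Prop :=
  subsemigroup U /\
  forall a, U a ->
    (exists e, U e /\ idem e /\ Rstar_in U a e) /\
    (exists f, U f /\ idem f /\ Lstar_in U a f).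

Definition abundant : Prop := abundant_in allS.

Definition adequate_in (U : S -> Prop) : Prop :=
  abundant_in U /\
  forall e f, U e -> U f -> idem e -> idem f -> e * f = f * e.

Definition star_subsemigroup (U : S -> Prop) : Prop :=
  abundant_in U /\
  (forall a b, U a -> U b -> (Lstar_in U a b <-> Lstar a b)) /\
  (forall a b, U a -> U b -> (Rstar_in U a b <-> Rstar a b)).

(* a^+ and a^* in an adequate subsemigroup U (unique idempotents of U) *)
Definition plus_in (U : S -> Prop) (a : S) : S :=
  epsilon (inhabits a) (fun e => U e /\ idem e /\ Rstar_in U a e).
Definition star_in (U : S -> Prop) (a : S) : S :=
  epsilon (inhabits a) (fun f => U f /\ idem f /\ Lstar_in U a f).

Definition decomp (S0 : S -> Prop) (x e y f : S) : Prop :=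
  S0 y /\ idem e /\ idem f /\ x = e * y * f /\
  GreenL e (plus_in S0 y) /\ GreenR f (star_in S0 y).

Definition adequate_transversal (S0 : S -> Prop) : Prop :=
  adequate_in S0 /\ star_subsemigroup S0 /\
  forall x, (exists e y f, decomp S0 x e y f) /\
    (forall e y f e' y' f', decomp S0 x e y f -> decomp S0 x e' y' f' -> y = y').

Definition bar (S0 : S -> Prop) (x : S) : S :=
  epsilon (inhabits x) (fun y => exists e f, decomp S0 x e y f).
Definition e_of (S0 : S -> Prop) (x : S) : S :=
  epsilon (inhabits x) (fun e => exists f, decomp S0 x e (bar S0 x) f).
Definition f_of (S0 : S -> Prop) (x : S) : S :=
  epsilon (inhabits x) (fun f => exists e, decomp S0 x e (bar S0 x) f).

Definition Iset (S0 : S -> Prop) (b : S) : Prop := exists x, b = e_of S0 x.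
Definition Lambdaset (S0 : S -> Prop) (a : S) : Prop := exists x, a = f_of S0 x.

End Defs.

(** If [a = f_z] then [a R (bar z)^*], and [a = (bar z)^* (bar z)^* a] is itself an
    admissible decomposition, so [bar a = (bar z)^*] and [a R bar a].  Hence
    [a R x^*] iff the idempotents [bar a] and [x^*] of [S0] are [R]-related; two
    [R]-related idempotents [e, f] satisfy [e f = f] and [f e = e], so they are
    equal as soon as they commute, which idempotents of the adequate [S0] do.
    The statement about [I] and [L] is dual. *)
From Stdlib Require Import ClassicalEpsilon.

Set Implicit Arguments.
Unset Strict Implicit.

Section Green.
Variable S : semigroup.
Local Notation "x * y" := (mul S x y).

Lemma GreenR_refl (a : S) : GreenR S a a.
Proof. split; exists None; reflexivity. Qed.

Lemma GreenL_refl (a : S) : GreenL S a a.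
Proof. split; exists None; reflexivity. Qed.

Lemma GreenR_sym (a b : S) : GreenR S a b -> GreenR S b a.
Proof. intros [Hu Hv]; split; assumption. Qed.

Lemma GreenL_sym (a b : S) : GreenL S a b -> GreenL S b a.
Proof. intros [Hu Hv]; split; assumption. Qed.

Lemma idem_mulR (a e : S) : idem S e -> GreenR S a e -> e * a = a.
Proof.
  intros He [[[u|] Hu] _]; simpl in Hu; subst a; [rewrite mulA, He; reflexivity | exact He].
Qed.

Lemma idem_mulL (a e : S) : idem S e -> GreenL S a e -> a * e = a.
Proof.
  intros He [[[u|] Hu] _]; simpl in Hu; subst a; [rewrite <- mulA, He; reflexivity | exact He].
Qed.

Lemma GreenR_idem_eq (a e f : S) :
  idem S a -> idem S e -> idem S f -> GreenR S a e -> GreenR S a f ->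
  e * f = f * e -> e = f.
Proof.
  intros Ha He Hf Hae Haf Hc.
  assert (Hef : e * f = f).
  { rewrite <- (idem_mulR Ha (GreenR_sym Haf)) at 1; rewrite mulA, (idem_mulR He Hae).
    exact (idem_mulR Ha (GreenR_sym Haf)). }
  assert (Hfe : f * e = e).
  { rewrite <- (idem_mulR Ha (GreenR_sym Hae)) at 1; rewrite mulA, (idem_mulR Hf Haf).
    exact (idem_mulR Ha (GreenR_sym Hae)). }
  rewrite <- Hfe, <- Hc; exact Hef.
Qed.

Lemma GreenL_idem_eq (b e f : S) :
  idem S b -> idem S e -> idem S f -> GreenL S b e -> GreenL S b f ->
  e * f = f * e -> e = f.
Proof.
  intros Hb He Hf Hbe Hbf Hc.
  assert (Hfe : f * e = f).
  { rewrite <- (idem_mulL Hb (GreenL_sym Hbf)) at 1; rewrite <- mulA, (idem_mulL He Hbe).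
    exact (idem_mulL Hb (GreenL_sym Hbf)). }
  assert (Hef : e * f = e).
  { rewrite <- (idem_mulL Hb (GreenL_sym Hbe)) at 1; rewrite <- mulA, (idem_mulL Hf Hbf).
    exact (idem_mulL Hb (GreenL_sym Hbe)). }
  rewrite <- Hef, Hc; exact Hfe.
Qed.

End Green.

Section Adequate.
Variables (S : semigroup) (S0 : S -> Prop).
Hypothesis HS0 : adequate_in S S0.
Local Notation "x * y" := (mul S x y).
Local Notation plus := (plus_in S S0).
Local Notation star := (star_in S S0).

Lemma plus_in_spec (y : S) :
  S0 y -> S0 (plus y) /\ idem S (plus y) /\ Rstar_in S S0 y (plus y).
Proof.
  intros Hy; destruct HS0 as [[_ Hab] _].
  destruct (Hab y Hy) as [Hex _].
  exact (epsilon_spec (inhabits y) _ Hex).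
Qed.

Lemma star_in_spec (y : S) :
  S0 y -> S0 (star y) /\ idem S (star y) /\ Lstar_in S S0 y (star y).
Proof.
  intros Hy; destruct HS0 as [[_ Hab] _].
  destruct (Hab y Hy) as [_ Hex].
  exact (epsilon_spec (inhabits y) _ Hex).
Qed.

Lemma idem_comm (e f : S) : S0 e -> S0 f -> idem S e -> idem S f -> e * f = f * e.
Proof. apply (proj2 HS0). Qed.

(* [g] and [g^+] are [R*]-related idempotents, whence [g g^+ = g^+] and [g^+ g = g]. *)
Lemma plus_in_idem (g : S) : S0 g -> idem S g -> plus g = g.
Proof.
  intros Hg Hig; destruct (plus_in_spec Hg) as [He [Hie HR]].
  assert (H1 : g * plus g = plus g) by exact (proj1 (HR (Some g) None Hg I) Hig).
  assert (H2 : plus g * g = g) by exact (proj2 (HR (Some (plus g)) None He I) Hie).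
  transitivity (g * plus g); [symmetry; exact H1|].
  rewrite idem_comm; auto.
Qed.

Lemma star_in_idem (g : S) : S0 g -> idem S g -> star g = g.
Proof.
  intros Hg Hig; destruct (star_in_spec Hg) as [He [Hie HL]].
  assert (H1 : star g * g = star g) by exact (proj1 (HL (Some g) None Hg I) Hig).
  assert (H2 : g * star g = g) by exact (proj2 (HL (Some (star g)) None He I) Hie).
  transitivity (star g * g); [symmetry; exact H1|].
  rewrite idem_comm; auto.
Qed.

Lemma GreenR_star_iff (a w x : S) :
  idem S a -> S0 w -> idem S w -> GreenR S a w -> S0 x ->
  (GreenR S a (star x) <-> w = star x).
Proof.
  intros Ha Hw Hiw Haw Hx; destruct (star_in_spec Hx) as [Hs [His _]]; split.
  - intros Has; apply (GreenR_idem_eq Ha Hiw His Haw Has); apply idem_comm; auto.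
  - intros <-; exact Haw.
Qed.

Lemma GreenL_plus_iff (b w x : S) :
  idem S b -> S0 w -> idem S w -> GreenL S b w -> S0 x ->
  (GreenL S b (plus x) <-> w = plus x).
Proof.
  intros Hb Hw Hiw Hbw Hx; destruct (plus_in_spec Hx) as [Hp [Hip _]]; split.
  - intros Hbp; apply (GreenL_idem_eq Hb Hiw Hip Hbw Hbp); apply idem_comm; auto.
  - intros <-; exact Hbw.
Qed.

End Adequate.

Section Transversal.
Variables (S : semigroup) (S0 : S -> Prop).
Hypothesis HT : adequate_transversal S S0.
Local Notation "x * y" := (mul S x y).
Local Notation plus := (plus_in S S0).
Local Notation star := (star_in S S0).
Local Notation bar := (bar S S0).

Lemma bar_eq (x e y f : S) : decomp S S0 x e y f -> bar x = y.
Proof.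
  intros Hd; destruct HT as [_ [_ Ht]]; destruct (Ht x) as [_ Huniq].
  destruct (epsilon_spec (inhabits x) (fun y => exists e f, decomp S S0 x e y f)
    (ex_intro _ y (ex_intro _ e (ex_intro _ f Hd)))) as [e' [f' Hd']].
  exact (Huniq _ _ _ _ _ _ Hd' Hd).
Qed.

Lemma decomp_bar (x : S) : exists e f, decomp S S0 x e (bar x) f.
Proof.
  destruct HT as [_ [_ Ht]]; destruct (Ht x) as [[e [y [f Hd]]] _].
  exact (epsilon_spec (inhabits x) (fun y => exists e f, decomp S S0 x e y f)
    (ex_intro _ y (ex_intro _ e (ex_intro _ f Hd)))).
Qed.

Lemma decomp_f_of (z : S) : exists e, decomp S S0 z e (bar z) (f_of S S0 z).
Proof.
  destruct (decomp_bar z) as [e [f Hd]].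
  exact (epsilon_spec (inhabits z) (fun f => exists e, decomp S S0 z e (bar z) f)
    (ex_intro _ f (ex_intro _ e Hd))).
Qed.

Lemma decomp_e_of (z : S) : exists f, decomp S S0 z (e_of S S0 z) (bar z) f.
Proof.
  destruct (decomp_bar z) as [e [f Hd]].
  exact (epsilon_spec (inhabits z) (fun e => exists f, decomp S S0 z e (bar z) f)
    (ex_intro _ e (ex_intro _ f Hd))).
Qed.

Lemma Lambdaset_bar (a : S) :
  Lambdaset S S0 a -> idem S a /\ S0 (bar a) /\ idem S (bar a) /\ GreenR S a (bar a).
Proof.
  intros [z ->]; destruct (decomp_f_of z) as [_ [Hy [_ [Ha [_ [_ HR]]]]]].
  destruct (star_in_spec (proj1 HT) Hy) as [Hs [His _]].
  set (s := star (bar z)) in *.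
  assert (Hbar : bar (f_of S S0 z) = s).
  { apply (bar_eq (e := s) (f := f_of S S0 z)).
    refine (conj Hs (conj His (conj Ha (conj _ (conj _ _))))).
    - rewrite His, (idem_mulR His HR); reflexivity.
    - rewrite (plus_in_idem (proj1 HT) Hs His); apply GreenL_refl.
    - rewrite (star_in_idem (proj1 HT) Hs His); exact HR. }
  rewrite Hbar; auto.
Qed.

Lemma Iset_bar (b : S) :
  Iset S S0 b -> idem S b /\ S0 (bar b) /\ idem S (bar b) /\ GreenL S b (bar b).
Proof.
  intros [z ->]; destruct (decomp_e_of z) as [_ [Hy [Hb [_ [_ [HL _]]]]]].
  destruct (plus_in_spec (proj1 HT) Hy) as [Hp [Hip _]].
  set (p := plus (bar z)) in *.
  assert (Hbar : bar (e_of S S0 z) = p).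
  { apply (bar_eq (e := e_of S S0 z) (f := p)).
    refine (conj Hp (conj Hb (conj Hip (conj _ (conj _ _))))).
    - rewrite !(idem_mulL Hip HL); reflexivity.
    - rewrite (plus_in_idem (proj1 HT) Hp Hip); exact HL.
    - rewrite (star_in_idem (proj1 HT) Hp Hip); apply GreenR_refl. }
  rewrite Hbar; auto.
Qed.

End Transversal.

Theorem lemma2p15 (S : semigroup) (S0 : S -> Prop) :
  abundant S -> adequate_transversal S S0 ->
  forall x a b : S, S0 x -> Lambdaset S S0 a -> Iset S S0 b ->
    (GreenR S a (star_in S S0 x) <-> bar S S0 a = star_in S S0 x) /\
    (GreenL S b (plus_in S S0 x) <-> bar S S0 b = plus_in S S0 x).
Proof.
  intros _ HT x a b Hx Ha Hb.
  destruct (Lambdaset_bar HT Ha) as [Hia [Hwa [Hiwa HRa]]].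
  destruct (Iset_bar HT Hb) as [Hib [Hwb [Hiwb HLb]]].
  split.
  - exact (GreenR_star_iff (proj1 HT) Hia Hwa Hiwa HRa Hx).
  - exact (GreenL_plus_iff (proj1 HT) Hib Hwb Hiwb HLb Hx).
Qed.
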